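(* Let $n>4$, let $k$ be a divisor of $n$ with $1<k\le n/2$, write $n=km$, let $G\in\{\mathrm{Sym}(n),\mathrm{Alt}(n)\}$, and let $\Omega$ be the set of partitions of $\{1,\dots,n\}$ into $m$ parts of size $k$, with the natural action of $G$. Then $G$ contains an element of prime order $p$ that is quasi-semiregular on $\Omega$ if and only if $p$ is odd, $k=p$ and $2\le m\le p$. Moreover, if $g$ is a quasi-semiregular element of prime order $p$ and $\Gamma=\{\Gamma_1,\dots,\Gamma_m\}$ is the unique $g$-invariant partition in $\Omega$, then $g\in\mathrm{Alt}(n)$, $g$ fixes each $\Gamma_i$ setwise, and either (1) $m=p$ and $g$ lies in the unique $G$-conjugacy class of elements of cycle type $1^pp^{m-1}$; or (2) $2\le m<p$ and $g$ lies in one of two $G$-conjugacy classes, namely the elements of cycle type $1^pp^{m-1}$ or those of cycle type $p^m$.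
   Context: A permutation $g$ is quasi-semiregular if $\langle g\rangle$ has a unique fixed point and acts semiregularly (only the identity fixes a point) on the remaining points. *)

From mathcomp Require Import all_boot all_fingroup all_solvable.
Set Implicit Arguments. Unset Strict Implicit. Unset Printing Implicit Defensive.
Local Open Scope group_scope.

Definition part_act (T : finType) (g : {perm T}) (P : {set {set T}}) : {set {set T}} :=
  [set [set g x | x in B] | B : {set T} in P].

Definition uniform_partitions (T : finType) (k : nat) : {set {set {set T}}} :=
  [set P : {set {set T}} | partition P [set: T] && [forall B in P, #|B| == k]].

Definition quasi_semiregular (T : finType) (g : {perm T})
    (Omega : {set {set {set T}}}) : Prop :=
  exists2 w, w \in Omega &
    (forall h, h \in <[g]> -> part_act h w = w) /\
    (forall x, x \in Omega -> (forall h, h \in <[g]> -> part_act h x = x) -> x = w) /\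
    (forall x h, x \in Omega -> x != w -> h \in <[g]> -> part_act h x = x -> h = 1).

Definition ncycles (T : finType) (g : {perm T}) (l : nat) : nat :=
  #|[set O in porbits g | (#|O| == l)%N]|.

(* cycle type of g is 1^a l^b (with l > 1): a fixed points, b cycles of length l,
   and no other cycles *)
Definition has_cycle_type_1l (T : finType) (g : {perm T}) (a l b : nat) : Prop :=
  [/\ ncycles g 1%N = a, ncycles g l = b &
      forall O, O \in porbits g -> (#|O| = 1)%N \/ #|O| = l].

(* Let [g] have prime order [p] and let [w] be the only [g]-invariant partition
   into [m] blocks of size [k]. Uniqueness makes [w] invariant under every
   permutation commuting with [g]. Testing this against a single cycle of [g],
   transpositions of fixed points and swaps or rotations of [p]-cycles, and
   comparing [w] with other [g]-invariant partitions built from it, shows that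
   every block is a [p]-cycle of [g] or the set of all [p] fixed points, and that
   there are fewer than [p] cycles of length [p]. Conversely, such a [g] permutes
   the blocks of any invariant partition in orbits of length [1] or [p], and the
   block of a fixed point is fixed, so there is no room for a long orbit. As
   [n > 4], [p] is odd and [g] is even. Elements of equal cycle type are
   conjugate in [Sym(n)]; they are conjugate in [Alt(n)] as well because [g]
   commutes with an odd permutation: a transposition of two fixed points or a
   swap of two [p]-cycles. *)

From mathcomp Require Import all_boot all_fingroup all_solvable.
From mathcomp Require Import zify.
Set Implicit Arguments. Unset Strict Implicit. Unset Printing Implicit Defensive.
Local Open Scope group_scope.

Section UniformPartitions.
Variable T : finType.
Implicit Types (P Q : {set {set T}}) (B S : {set T}) (f : T -> {set T}).

Lemma uniform_partitionsP P k :
  reflect (partition P [set: T] /\ {in P, forall B, #|B| = k})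
          (P \in uniform_partitions T k).
Proof.
rewrite inE; apply: (iffP andP) => -[pP sP]; split=> //.
  by move=> B /(forall_inP sP)/eqP.
by apply/forall_inP=> B /sP ->.
Qed.

Lemma class_partition f :
  (forall z, z \in f z) -> (forall z y, y \in f z -> f y = f z) ->
  partition (f @: T) [set: T].
Proof.
move=> fz fy; apply/and3P; split.
- apply/eqP/setP=> x; rewrite inE; apply/bigcupP; exists (f x) => //.
  exact: imset_f.
- apply/trivIsetP=> _ _ /imsetP[a _ ->] /imsetP[b _ ->] neq.
  rewrite -setI_eq0; apply/eqP/setP=> u; rewrite !inE.
  apply/andP=> -[ua ub]; move/negP: neq; apply.
  by rewrite -(fy _ _ ua) -(fy _ _ ub).
- by apply/negP=> /imsetP[a _ e]; move: (fz a); rewrite -e inE.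
Qed.

Lemma class_uniform_partition f k :
  (forall z, z \in f z) -> (forall z y, y \in f z -> f y = f z) ->
  (forall z, #|f z| = k) -> f @: T \in uniform_partitions T k.
Proof.
move=> fz fy fk; apply/uniform_partitionsP; split; first exact: class_partition.
by move=> _ /imsetP[z _ ->].
Qed.

Lemma card_uniform_partitions P k :
  P \in uniform_partitions T k -> #|T| = (k * #|P|)%N.
Proof.
case/uniform_partitionsP=> pP sP.
by rewrite -cardsT (card_uniform_partition sP pP) mulnC.
Qed.

Section Blocks.
Variable P : {set {set T}}.
Hypothesis pP : partition P [set: T].

Lemma pblockT_mem x : pblock P x \in P.
Proof. by case/and3P: pP => /eqP cP _ _; apply: pblock_mem; rewrite cP inE. Qed.

Lemma mem_pblockT x : x \in pblock P x.
Proof. by case/and3P: pP => /eqP cP _ _; rewrite mem_pblock cP inE. Qed.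

Lemma pblockT_eq B x : B \in P -> x \in B -> pblock P x = B.
Proof. by case/and3P: pP => _ tP _; exact: def_pblock. Qed.

Lemma partition_block_eq B1 B2 x :
  B1 \in P -> B2 \in P -> x \in B1 -> x \in B2 -> B1 = B2.
Proof. by move=> P1 P2 x1 x2; rewrite -(pblockT_eq P1 x1) (pblockT_eq P2 x2). Qed.

Lemma partition_block_n0 B : B \in P -> exists x, x \in B.
Proof.
case/and3P: pP => _ _ P0 BP; have [E|[x xB]] := set_0Vmem B; last by exists x.
by move: P0; rewrite -E BP.
Qed.
End Blocks.

Lemma partition_subset_eq P Q :
  partition P [set: T] -> partition Q [set: T] -> P \subset Q -> P = Q.
Proof.
move=> pP pQ PQ; apply/eqP; rewrite eqEsubset PQ /=.
apply/subsetP=> B BQ; have [x xB] := partition_block_n0 pQ BQ.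
have PxQ := subsetP PQ _ (pblockT_mem pP x).
by rewrite -(partition_block_eq pQ PxQ BQ (mem_pblockT pP x) xB) pblockT_mem.
Qed.

Lemma dvdn_card_union_blocks P k S : P \in uniform_partitions T k ->
  (forall B x, B \in P -> x \in B -> x \in S -> B \subset S) -> (k %| #|S|)%N.
Proof.
case/uniform_partitionsP=> pP sP HS.
set Q := [set B in P | B \subset S].
have QP : Q \subset P by apply/subsetP=> B; rewrite inE => /andP[].
have pQ : partition Q S.
  case/and3P: (pP) => _ tP P0; apply/and3P; split.
  - apply/eqP/setP=> x; apply/bigcupP/idP.
      by case=> B; rewrite inE => /andP[_ /subsetP] h /h.
    move=> xS; exists (pblock P x); last exact: mem_pblockT.
    by rewrite inE pblockT_mem //= (HS _ _ (pblockT_mem pP x) (mem_pblockT pP x)).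
  - exact: trivIsetS QP tP.
  - by apply: contra P0; rewrite inE => /andP[].
by rewrite (@card_uniform_partition _ k _ _ _ pQ) ?dvdn_mull // => B /(subsetP QP)/sP.
Qed.
End UniformPartitions.

Section PartitionAction.
Variable T : finType.
Implicit Types (g c d : {perm T}) (P : {set {set T}}) (A B : {set T}).

Lemma part_act1 P : part_act 1 P = P.
Proof.
rewrite /part_act -[RHS]imset_id; apply: eq_imset => B.
by rewrite -[RHS]imset_id; apply: eq_imset => x; rewrite perm1.
Qed.

Lemma part_actM c d P : part_act (c * d) P = part_act d (part_act c P).
Proof.
rewrite /part_act -imset_comp; apply: eq_imset => B /=.
by rewrite -imset_comp; apply: eq_imset => x /=; rewrite permM.
Qed.

Lemma part_actX g P i : part_act g P = P -> part_act (g ^+ i) P = P.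
Proof.
by move=> gP; elim: i => [|i IH]; rewrite ?expg0 ?part_act1 // expgSr part_actM IH.
Qed.

Lemma part_act_uniform c P k :
  P \in uniform_partitions T k -> part_act c P \in uniform_partitions T k.
Proof.
case/uniform_partitionsP=> pP sP.
have -> : part_act c P = (fun z => [set c x | x in pblock P (c^-1 z)]) @: T.
  apply/setP=> C; apply/imsetP/imsetP => -[].
    move=> B BP ->; have [x xB] := partition_block_n0 pP BP.
    by exists (c x) => //; rewrite permK (pblockT_eq pP BP xB).
  by move=> z _ ->; exists (pblock P (c^-1 z)); rewrite ?pblockT_mem.
apply: class_uniform_partition => [z|z y|z].
- by apply/imsetP; exists (c^-1 z); rewrite ?mem_pblockT ?permKV.
- by case/imsetP=> u uB ->; rewrite permK (pblockT_eq pP (pblockT_mem pP _) uB).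
- by rewrite card_imset ?sP ?pblockT_mem //; exact: perm_inj.
Qed.

Lemma perm_set_stable g A : (forall u, u \in A -> g u \in A) -> [set g u | u in A] = A.
Proof.
move=> gA; apply/eqP; rewrite eqEcard card_imset ?leqnn ?andbT; last exact: perm_inj.
by apply/subsetP=> _ /imsetP[u uA ->]; exact: gA.
Qed.

Lemma perm_set_stableC g A : [set g u | u in A] = A -> [set g u | u in ~: A] = ~: A.
Proof.
move=> gA; apply: perm_set_stable => u; rewrite !inE; apply: contra.
by rewrite -{1}gA => /imsetP[a aA /perm_inj ->].
Qed.

Definition set_perm g : {perm {set T}} := perm (imset_inj (@perm_inj _ g)).

Lemma set_permE g B : set_perm g B = [set g u | u in B].
Proof. exact: permE. Qed.

Lemma set_permX g i B : (set_perm g ^+ i) B = [set (g ^+ i) u | u in B].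
Proof.
elim: i => [|i IH]; last first.
  by rewrite expgSr permM IH set_permE -imset_comp; apply: eq_imset => u; rewrite expgSr permM.
by rewrite expg0 perm1 -[LHS]imset_id; apply: eq_imset => u; rewrite perm1.
Qed.

Lemma order_set_perm_dvd g : (#[set_perm g] %| #[g])%N.
Proof.
rewrite order_dvdn; apply/eqP/permP => B; rewrite set_permX expg_order perm1.
by rewrite -[RHS]imset_id; apply: eq_imset => u; rewrite perm1.
Qed.

Lemma part_act_blockwise g P :
  (forall B, B \in P -> [set g u | u in B] = B) -> part_act g P = P.
Proof. by move=> gP; rewrite /part_act -[RHS]imset_id; apply: eq_in_imset. Qed.

(* For an element of prime order every nontrivial power generates <[g]>, so
   semiregularity off the fixed point is automatic. *)
Lemma quasi_semiregular_prime g (Om : {set {set {set T}}}) : prime #[g] ->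
  quasi_semiregular g Om <->
  exists2 w, w \in Om & part_act g w = w /\
    forall Q, Q \in Om -> part_act g Q = Q -> Q = w.
Proof.
move=> pr; split.
  case=> w wO [gw [uniq_w _]]; exists w => //; split; first exact: gw (cycle_id g).
  by move=> Q QO gQ; apply: uniq_w => // _ /cycleP[i ->]; exact: part_actX.
case=> w wO [gw uniq_w]; exists w => //; split.
  by move=> _ /cycleP[i ->]; exact: part_actX.
split=> [Q QO gQ | Q h QO Qw /cyclePmin[i ilt ->] hQ].
  exact/uniq_w/gQ/cycle_id.
have [->|i0] := posnP i; first by rewrite expg0.
have /eqP gen : generator <[g]> (g ^+ i).
  by rewrite generator_coprime prime_coprime // gtnNdvd.
have /cycleP[j gE] : g \in <[g ^+ i]> by rewrite -gen cycle_id.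
by case/eqP: Qw; apply: uniq_w; rewrite // gE part_actX.
Qed.
End PartitionAction.

Section SpecialPartitions.
Variable T : finType.
Implicit Types (g : {perm T}) (A : {set T}) (f : T -> {set T}).

Lemma part_act_class g f : (forall z, [set g u | u in f z] = f (g z)) ->
  part_act g (f @: T) = f @: T.
Proof.
move=> gf; rewrite /part_act -imset_comp (eq_imset _ gf).
apply/setP=> B; apply/imsetP/imsetP=> -[z _ ->]; first by exists (g z).
by exists (g^-1 z) => //; rewrite permKV.
Qed.

Definition complement_partition A := [set (if x \in A then A else ~: A) | x : T].

Lemma complement_partition_uniform A k : #|A| = k -> #|~: A| = k ->
  complement_partition A \in uniform_partitions T k.
Proof.
move=> cA cAc; apply: class_uniform_partition => [x|x y|x]; case: ifP => // xA.
- by rewrite inE xA.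
- by move=> yA; rewrite yA.
- by rewrite inE => /negbTE ->.
Qed.

Lemma complement_partition_fixed g A : [set g u | u in A] = A ->
  part_act g (complement_partition A) = complement_partition A.
Proof.
move=> gA; apply: part_act_blockwise => _ /imsetP[x _ ->].
by case: ifP => _ //; exact: perm_set_stableC.
Qed.
End SpecialPartitions.

Section Orbits.
Variable T : finType.
Implicit Types (g h : {perm T}) (x y z u : T).

Lemma porbit_of_mem g x y : y \in porbit g x -> porbit g y = porbit g x.
Proof. by move=> yx; apply/eqP; rewrite eq_porbit_mem. Qed.

Lemma porbitS g x : porbit g (g x) = porbit g x.
Proof. by apply: porbit_of_mem; rewrite -{1}(expg1 g) mem_porbit. Qed.

Lemma mem_porbitS g x u : (g u \in porbit g x) = (u \in porbit g x).
Proof. by rewrite -!eq_porbit_mem porbitS. Qed.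

Lemma porbit_fixed g x : g x = x -> porbit g x = [set x].
Proof.
move=> gx; apply/setP=> y; rewrite inE; apply/porbitP/eqP => [[i ->]|->].
  exact: permX_fix.
by exists 0; rewrite expg0 perm1.
Qed.

Lemma card_porbit1 g x : (#|porbit g x| == 1%N) = (g x == x).
Proof.
apply/idP/eqP=> [/cards1P[a E]|gx]; last by rewrite porbit_fixed // cards1.
have := porbit_id g x; have := mem_porbit g 1 x.
by rewrite expg1 E !inE => /eqP -> /eqP ->.
Qed.

Lemma porbit_fixE g x y : y \in porbit g x -> (g y == y) = (g x == x).
Proof. by move/porbit_of_mem => E; rewrite -!card_porbit1 E. Qed.

Lemma card_porbit_dvd g x : (#|porbit g x| %| #[g])%N.
Proof. by rewrite porbit.unlock; exact: dvdn_orbit. Qed.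

Lemma card_porbit_prime g x : prime #[g] ->
  #|porbit g x| = 1%N \/ #|porbit g x| = #[g].
Proof.
move=> pr; have [->|ne] := eqVneq #|porbit g x| 1%N; first by left.
by right; apply/(prime_nt_dvdP pr ne)/card_porbit_dvd.
Qed.

Lemma card_porbit_moved g x : prime #[g] -> g x != x -> #|porbit g x| = #[g].
Proof. by move=> pr; case: (card_porbit_prime x pr) => // /eqP; rewrite card_porbit1 => ->. Qed.

Lemma intertwineX (phi : T -> T) g h : (forall z, phi (g z) = h (phi z)) ->
  forall i z, phi ((g ^+ i) z) = (h ^+ i) (phi z).
Proof. by move=> gh i z; rewrite !permX; elim: i => //= i IH; rewrite gh IH. Qed.

Lemma conjg_intertwine (phi : {perm T}) g h :
  (forall z, phi (g z) = h (phi z)) -> g ^ phi = h.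
Proof. by move=> gh; apply/permP => y; rewrite -(permKV phi y) permJ gh. Qed.
End Orbits.

Section CyclicSuccessor.
Variable T : finType.
Implicit Types (s : seq T) (u : T).

Lemma next_pair (a b : T) : next [:: a; b] a = b.
Proof. by rewrite /next /= eqxx. Qed.

Lemma next_notin s u : u \notin s -> next s u = u.
Proof. by move=> su; rewrite next_nth (negbTE su). Qed.

Lemma next_neq s u : uniq s -> (1 < size s)%N -> u \in s -> next s u != u.
Proof.
case: s => [//|a t] Us t1 us; rewrite next_nth us.
set i := index u (a :: t).
have ilt : (i < size (a :: t))%N by rewrite index_mem.
have ui : nth a (a :: t) i = u by rewrite nth_index.
have [it|ti] := ltnP i (size t).
  have -> : nth a t i = nth a (a :: t) i.+1 by [].
  by rewrite -ui nth_uniq //= ?ltnS // eqn_leq ltnn.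
rewrite nth_default //; apply/eqP => au.
have : nth a (a :: t) 0 == nth a (a :: t) i by rewrite /= ui au.
by rewrite nth_uniq // => /eqP i0; move: t1 ti; rewrite -i0 /=; case: (size t).
Qed.

Lemma iter_next s u : uniq s -> iter (size s) (next s) u = u.
Proof.
move=> Us; have [us|us] := boolP (u \in s).
  rewrite -(order_cycle (cycle_next Us) Us us).
  exact/iter_order/(can_inj (prev_next Us)).
by elim: (size s) => //= i ->; exact: next_notin.
Qed.
End CyclicSuccessor.

Section OrbitRepresentatives.
Variable T : finType.
Implicit Types (g h : {perm T}) (x y z u : T) (s : seq T).

Definition orbit_rep g x := odflt x [pick y in porbit g x].

Definition orbit_exp g x := index x (traject g (orbit_rep g x) #|porbit g x|).

Lemma orbit_rep_mem g x : orbit_rep g x \in porbit g x.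
Proof. by rewrite /orbit_rep; case: pickP => [//|/(_ x)]; rewrite porbit_id. Qed.

Lemma porbit_orbit_rep g x : porbit g (orbit_rep g x) = porbit g x.
Proof. exact/porbit_of_mem/orbit_rep_mem. Qed.

Lemma orbit_rep_eq g x y : porbit g x = porbit g y -> orbit_rep g x = orbit_rep g y.
Proof. by rewrite /orbit_rep => ->; case: pickP => // /(_ y); rewrite porbit_id. Qed.

Lemma orbit_repK g x : orbit_rep g (orbit_rep g x) = orbit_rep g x.
Proof. exact/orbit_rep_eq/porbit_orbit_rep. Qed.

Lemma orbit_rep_fixed g x : g x = x -> orbit_rep g x = x.
Proof. by move=> gx; have := orbit_rep_mem g x; rewrite porbit_fixed // inE => /eqP. Qed.

Lemma orbit_repS g x : orbit_rep g (g x) = orbit_rep g x.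
Proof. exact/orbit_rep_eq/porbitS. Qed.

Lemma orbit_rep_moved g x : (g (orbit_rep g x) == orbit_rep g x) = (g x == x).
Proof. exact/porbit_fixE/orbit_rep_mem. Qed.

Lemma orbit_reps_eq g u v :
  orbit_rep g u = u -> orbit_rep g v = v -> u \in porbit g v -> u = v.
Proof. by move=> ru rv /porbit_of_mem/orbit_rep_eq; rewrite ru rv. Qed.

Lemma orbit_exp_lt g x : (orbit_exp g x < #|porbit g x|)%N.
Proof.
rewrite /orbit_exp -{2}(size_traject g (orbit_rep g x) #|porbit g x|) index_mem.
by rewrite -(porbit_orbit_rep g x) -porbit_traject porbit_orbit_rep porbit_id.
Qed.

Lemma orbit_expE g x : (g ^+ orbit_exp g x) (orbit_rep g x) = x.
Proof.
rewrite permX -(nth_traject _ (orbit_exp_lt g x)) nth_index //.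
by rewrite -(porbit_orbit_rep g x) -porbit_traject porbit_orbit_rep porbit_id.
Qed.

Lemma iter_mod_porbit g x i : iter i g x = iter (i %% #|porbit g x|) g x.
Proof.
have iter_mul q : iter (q * #|porbit g x|) g x = x.
  by elim: q => [|q IH] //; rewrite mulSn iterD IH iter_porbit.
by rewrite {1}(divn_eq i #|porbit g x|) addnC iterD iter_mul.
Qed.

Lemma iter_porbit_inj g x i j : (i < #|porbit g x|)%N -> (j < #|porbit g x|)%N ->
  iter i g x = iter j g x -> i = j.
Proof.
move=> ilt jlt E; apply/eqP.
rewrite -(nth_uniq x (s := traject g x #|porbit g x|)) ?size_traject //;
  last exact: uniq_traject_porbit.
by rewrite !nth_traject // E.
Qed.

Lemma orbit_exp_rep g x : orbit_exp g (orbit_rep g x) = 0%N.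
Proof.
apply: (@iter_porbit_inj g (orbit_rep g x)); first exact: orbit_exp_lt.
  by rewrite lt0n card_porbit_neq0.
by have := orbit_expE g (orbit_rep g x); rewrite orbit_repK permX.
Qed.

Lemma orbit_expS g x :
  orbit_exp g (g x) = ((orbit_exp g x).+1 %% #|porbit g x|)%N.
Proof.
have d0 : (0 < #|porbit g x|)%N by rewrite lt0n card_porbit_neq0.
have Hd : #|porbit g (orbit_rep g x)| = #|porbit g x| by rewrite porbit_orbit_rep.
apply: (iter_porbit_inj (g := g) (x := orbit_rep g x)); rewrite ?Hd ?ltn_pmod //.
  by have := orbit_exp_lt g (g x); rewrite porbitS.
have := orbit_expE g (g x); rewrite orbit_repS permX => ->.
by rewrite -Hd -iter_mod_porbit iterS -permX orbit_expE.
Qed.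

Lemma commute_fixed_of_rep (phi : T -> T) g z : (forall z, phi (g z) = g (phi z)) ->
  phi (orbit_rep g z) = orbit_rep g z -> phi z = z.
Proof. by move=> gphi E; rewrite -{1}(orbit_expE g z) (intertwineX gphi) E orbit_expE. Qed.

(* A map on orbit representatives sending each cycle of [g] to a cycle of [h] of
   the same length, injectively on cycles, extends to a permutation [phi] with
   [phi \o g = h \o phi]. *)
Section Intertwiner.
Variables (g h : {perm T}) (psi : T -> T).
Hypothesis card_psi : forall x, #|porbit h (psi (orbit_rep g x))| = #|porbit g x|.
Hypothesis psi_inj : forall x y,
  psi (orbit_rep g x) \in porbit h (psi (orbit_rep g y)) -> porbit g x = porbit g y.

Definition intertwiner_fun z := iter (orbit_exp g z) h (psi (orbit_rep g z)).

Lemma intertwiner_fun_inj : injective intertwiner_fun.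
Proof.
move=> z z'; rewrite /intertwiner_fun => E.
have Eo : porbit g z = porbit g z'.
  apply: psi_inj; rewrite -(porbit_perm h (orbit_exp g z')) permX -E.
  by rewrite -permX porbit_perm porbit_id.
have Er := orbit_rep_eq Eo; rewrite -Er in E.
have Ee : orbit_exp g z = orbit_exp g z'.
  apply: (iter_porbit_inj (g := h) (x := psi (orbit_rep g z))) => //.
    by rewrite card_psi orbit_exp_lt.
  by rewrite card_psi Eo orbit_exp_lt.
by rewrite -(orbit_expE g z) -(orbit_expE g z') Er Ee.
Qed.

Definition intertwiner := perm intertwiner_fun_inj.

Lemma intertwinerE z : intertwiner (g z) = h (intertwiner z).
Proof.
rewrite !permE /intertwiner_fun orbit_repS orbit_expS -iterS.
by rewrite [RHS]iter_mod_porbit card_psi.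
Qed.

Lemma intertwiner_rep x : intertwiner (orbit_rep g x) = psi (orbit_rep g x).
Proof. by rewrite permE /intertwiner_fun orbit_exp_rep orbit_repK. Qed.
End Intertwiner.

Lemma cycle_rotation g s q : uniq s ->
  (forall u, u \in s -> orbit_rep g u = u /\ #|porbit g u| = q) ->
  exists phi : {perm T}, [/\ forall z, phi (g z) = g (phi z),
     forall x, phi (orbit_rep g x) = next s (orbit_rep g x) &
     forall x, orbit_rep g (phi x) = next s (orbit_rep g x)].
Proof.
move=> Us Hs.
have rep_next x : orbit_rep g (next s (orbit_rep g x)) = next s (orbit_rep g x).
  have [xs|xs] := boolP (orbit_rep g x \in s); last by rewrite next_notin ?orbit_repK.
  by case: (Hs _ (etrans (mem_next _ _) xs)).
have card_next x : #|porbit g (next s (orbit_rep g x))| = #|porbit g x|.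
  rewrite -(porbit_orbit_rep g x); have [xs|xs] := boolP (orbit_rep g x \in s).
    by rewrite (Hs _ xs).2 (Hs _ (etrans (mem_next _ _) xs)).2.
  by rewrite next_notin.
have next_inj x y : next s (orbit_rep g x) \in porbit g (next s (orbit_rep g y)) ->
    porbit g x = porbit g y.
  move/(orbit_reps_eq (rep_next x) (rep_next y))/(can_inj (prev_next Us)) => E.
  by rewrite -porbit_orbit_rep E porbit_orbit_rep.
exists (intertwiner card_next next_inj); split=> [z|x|x].
- exact: intertwinerE.
- exact: intertwiner_rep.
rewrite -{1}(orbit_expE g x) (intertwineX (intertwinerE card_next next_inj)).
by rewrite intertwiner_rep (orbit_rep_eq (porbit_perm _ _ _)) rep_next.
Qed.
End OrbitRepresentatives.

Section Centralizer.
Variable T : finType.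
Implicit Types (g : {perm T}) (x y z u : T) (s : seq T).

Lemma tperm_commute_fixed g x y : g x = x -> g y = y ->
  forall u, tperm x y (g u) = g (tperm x y u).
Proof.
move=> gx gy u; case: (tpermP x y u) => [->|->|ux uy]; rewrite ?gx ?gy ?tpermL ?tpermR //.
rewrite tpermD //; apply/eqP => E; [apply: ux | apply: uy];
  by apply: (@perm_inj _ g); rewrite ?gx ?gy E.
Qed.

Lemma porbit_restrict_inj g x0 :
  injective (fun z => if z \in porbit g x0 then g z else z).
Proof.
move=> a b /=; case: ifP => ha; case: ifP => hb; [exact: perm_inj | | | by []].
  by move=> E; move: hb; rewrite -E mem_porbitS ha.
by move=> E; move: ha; rewrite E mem_porbitS hb.
Qed.

Definition porbit_cycle g x0 := perm (@porbit_restrict_inj g x0).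

Lemma porbit_cycleE g x0 z :
  porbit_cycle g x0 z = if z \in porbit g x0 then g z else z.
Proof. by rewrite permE. Qed.

Lemma porbit_cycle_commute g x0 z :
  porbit_cycle g x0 (g z) = g (porbit_cycle g x0 z).
Proof. by rewrite !porbit_cycleE mem_porbitS; case: ifP. Qed.

Lemma cycle_swap g r1 r2 :
  orbit_rep g r1 = r1 -> orbit_rep g r2 = r2 -> r1 != r2 ->
  #|porbit g r1| = #|porbit g r2| ->
  exists sg : {perm T}, [/\ forall z, sg (g z) = g (sg z), sg r1 = r2,
    forall z, sg (sg z) = z &
    forall z, (sg z == z) = (z \notin porbit g r1 :|: porbit g r2)].
Proof.
move=> rr1 rr2 r12 c12; set s := [:: r1; r2].
have Us : uniq s by rewrite /= inE r12.
have Hs u : u \in s -> orbit_rep g u = u /\ #|porbit g u| = #|porbit g r1|.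
  by rewrite !inE => /orP[]/eqP ->.
have [sg [sgg sg_rep rep_sg]] := cycle_rotation Us Hs.
exists sg; split=> // [|z|z].
- by rewrite -{1}rr1 sg_rep rr1 next_pair.
- have next2 u : next s (next s u) = u by have := iter_next u Us.
  apply: (@commute_fixed_of_rep _ (fun z => sg (sg z)) g z) => [u|/=].
    by rewrite /= !sgg.
  have rn : orbit_rep g (next s (orbit_rep g z)) = next s (orbit_rep g z).
    by rewrite -sg_rep rep_sg orbit_repK sg_rep.
  by rewrite sg_rep -rn sg_rep rn next2.
have rep_in r : orbit_rep g r = r -> (orbit_rep g z == r) = (z \in porbit g r).
  move=> rr; apply/eqP/idP => [<-|zr]; first by rewrite porbit_orbit_rep porbit_id.
  by rewrite (orbit_rep_eq (porbit_of_mem zr)) rr.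
have -> : (z \in porbit g r1 :|: porbit g r2) = (orbit_rep g z \in s).
  by rewrite !inE (rep_in _ rr1) (rep_in _ rr2).
have [zs|zs] := boolP (orbit_rep g z \in s).
  apply/negbTE; apply: contra (next_neq Us isT zs) => /eqP sgz.
  by rewrite -rep_sg sgz.
by apply/eqP/(commute_fixed_of_rep sgg); rewrite sg_rep next_notin.
Qed.

Lemma cycle_rotation_orbits g s : prime #[g] -> uniq s -> size s = #[g] ->
  (forall u, u \in s -> orbit_rep g u = u /\ #|porbit g u| = #[g]) ->
  exists d : {perm T}, [/\ forall z, d (g z) = g (d z),
    forall i z, orbit_rep g ((d ^+ i) z) = iter i (next s) (orbit_rep g z) &
    forall z, orbit_rep g z \in s -> #|porbit d z| = #[g]].
Proof.
move=> pr Us ss Hs; have p1 := prime_gt1 pr.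
have [d [dg d_rep rep_d]] := cycle_rotation Us Hs.
have rep_dX i z : orbit_rep g ((d ^+ i) z) = iter i (next s) (orbit_rep g z).
  by elim: i => [|i IH]; rewrite ?expg0 ?perm1 // expgSr permM rep_d IH.
have dX i x : (d ^+ i) (orbit_rep g x) = iter i (next s) (orbit_rep g x).
  elim: i => [|i IH]; rewrite ?expg0 ?perm1 // expgSr permM.
  have E : orbit_rep g ((d ^+ i) (orbit_rep g x)) = (d ^+ i) (orbit_rep g x).
    by rewrite rep_dX orbit_repK IH.
  by rewrite -E d_rep E IH.
have dp : d ^+ #[g] = 1.
  apply/permP=> z; rewrite perm1; apply: (commute_fixed_of_rep (phi := d ^+ #[g]) (g := g)).
    by move=> u; rewrite (intertwineX (fun z => esym (dg z))).
  by rewrite dX -ss iter_next.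
exists d; split=> // z zs.
apply/(prime_nt_dvdP pr); last by rewrite (dvdn_trans (card_porbit_dvd d z)) ?order_dvdn ?dp.
rewrite card_porbit1; apply: contra (next_neq Us _ zs); last by rewrite ss.
by move=> /eqP dz; have := rep_dX 1%N z; rewrite expg1 dz /= => <-.
Qed.
End Centralizer.

Section CycleCounting.
Variable T : finType.
Implicit Types (g c : {perm T}) (x y z : T) (P : {set {set T}}).

Lemma porbits_partition g : partition (porbits g) [set: T].
Proof. by apply: class_partition => [z|z y]; [exact: porbit_id | exact: porbit_of_mem]. Qed.

Lemma sum_nat_bool_card P (b : {set T} -> bool) :
  (\sum_(O in P) (b O : nat) = #|[set O in P | b O]|)%N.
Proof.
rewrite -sum1_card big_mkcond [RHS]big_mkcond /=; apply: eq_bigr => O _.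
by rewrite inE; case: (O \in P); case: (b O).
Qed.

Lemma card_cycle_type g q : (1 < q)%N ->
  (forall x, #|porbit g x| = 1%N \/ #|porbit g x| = q) ->
  #|T| = (ncycles g 1 + q * ncycles g q)%N /\
  #|porbits g| = (ncycles g 1 + ncycles g q)%N.
Proof.
move=> q1 gq.
have cardO O : O \in porbits g ->
    #|O| = ((#|O| == 1%N) + q * (#|O| == q))%N /\ 1%N = ((#|O| == 1%N) + (#|O| == q))%N.
  case/imsetP=> x _ ->; case: (gq x) => ->; rewrite eqxx.
    by rewrite (eq_sym 1%N) (gtn_eqF q1) muln0.
  by rewrite (gtn_eqF q1) muln1.
split.
  rewrite -cardsT (card_partition (porbits_partition g)).
  rewrite (eq_bigr _ (fun O HO => (cardO O HO).1)) big_split /= -big_distrr /=.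
  by rewrite !sum_nat_bool_card.
rewrite -sum1_card (eq_bigr _ (fun O HO => (cardO O HO).2)) big_split /=.
by rewrite !sum_nat_bool_card.
Qed.

Lemma ncycles1E g : ncycles g 1 = #|[set x | g x == x]|.
Proof.
rewrite /ncycles.
suff -> : [set O in porbits g | #|O| == 1%N] = [set [set x] | x in [set x | g x == x]].
  by rewrite card_imset //; exact: set1_inj.
apply/setP=> O; rewrite inE; apply/andP/imsetP.
  case=> /imsetP[x _ ->] x1; exists x; first by rewrite inE -card_porbit1.
  by apply/porbit_fixed/eqP; rewrite -card_porbit1.
case=> x; rewrite inE => /eqP gx ->; rewrite -(porbit_fixed gx).
by rewrite imset_f // card_porbit1 gx.
Qed.

Lemma ncycles_reps g q : (1 < q)%N -> (forall x, g x != x -> #|porbit g x| = q) ->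
  ncycles g q = #|[set orbit_rep g x | x in [set x | g x != x]]|.
Proof.
move=> q1 gq; rewrite /ncycles.
suff -> : [set O in porbits g | #|O| == q] =
          porbit g @: [set orbit_rep g x | x in [set x | g x != x]].
  rewrite card_in_imset // => _ _ /imsetP[x _ ->] /imsetP[y _ ->] E.
  by apply: (@orbit_reps_eq _ g); rewrite ?orbit_repK // -E porbit_id.
apply/setP=> O; rewrite inE; apply/andP/imsetP.
  case=> /imsetP[x _ ->] xq; exists (orbit_rep g x); last by rewrite porbit_orbit_rep.
  apply: imset_f; rewrite inE -card_porbit1; apply: contraTN xq => /eqP ->.
  by rewrite eq_sym gtn_eqF.
case=> _ /imsetP[x + ->] ->; rewrite inE => gx.
by rewrite imset_f // porbit_orbit_rep gq.
Qed.

Lemma porbitJ g c x : porbit (g ^ c) (c x) = [set c y | y in porbit g x].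
Proof.
apply/setP=> u; apply/porbitP/imsetP => [[i ->]|[y /porbitP[i ->] ->]].
  by exists ((g ^+ i) x); rewrite ?mem_porbit // -conjXg permJ.
by exists i; rewrite -conjXg permJ.
Qed.

Lemma porbitsJ g c :
  porbits (g ^ c) = [set [set c y | y in O] | O : {set T} in porbits g].
Proof.
apply/setP=> O; apply/imsetP/imsetP => [[y _ ->]|[_ /imsetP[x _ ->] ->]].
  by exists (porbit g (c^-1 y)); rewrite ?imset_f // -porbitJ permKV.
by exists (c x); rewrite ?porbitJ.
Qed.

Lemma ncyclesJ g c l : ncycles (g ^ c) l = ncycles g l.
Proof.
rewrite /ncycles.
suff -> : [set O in porbits (g ^ c) | #|O| == l] =
    (fun O : {set T} => [set c y | y in O]) @: [set O in porbits g | #|O| == l].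
  by rewrite card_imset //; apply: imset_inj; exact: perm_inj.
apply/setP=> O; rewrite inE porbitsJ; apply/andP/imsetP.
  case=> /imsetP[O' O'g ->]; rewrite card_imset; last exact: perm_inj.
  by exists O' => //; rewrite inE O'g.
case=> O'; rewrite inE => /andP[O'g O'l] ->.
by rewrite imset_f // card_imset //; exact: perm_inj.
Qed.

Lemma cycle_typeJ g c a l b :
  has_cycle_type_1l g a l b -> has_cycle_type_1l (g ^ c) a l b.
Proof.
case=> g1 gl gO; split; rewrite ?ncyclesJ // => O; rewrite porbitsJ.
by case/imsetP=> O' O'g ->; rewrite card_imset; [exact: gO | exact: perm_inj].
Qed.

Lemma cycle_type_porbit g a q b : has_cycle_type_1l g a q b ->
  forall x, #|porbit g x| = 1%N \/ #|porbit g x| = q.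
Proof. by case=> _ _ gO x; apply/gO/imset_f. Qed.

Lemma cycle_type_prime g : prime #[g] ->
  has_cycle_type_1l g (ncycles g 1) #[g] (ncycles g #[g]).
Proof. by move=> pr; split=> // _ /imsetP[x _ ->]; exact: card_porbit_prime. Qed.
End CycleCounting.

Section CycleTypeConjugacy.
Variable T : finType.
Implicit Types (g h : {perm T}) (x y z : T) (A B : {set T}).

Lemma card_eq_injection A B : #|A| = #|B| ->
  exists f : T -> T, {in A, forall x, f x \in B} /\ {in A &, injective f}.
Proof.
move=> AB; have [A0|[x0 x0A]] := set_0Vmem A.
  by exists id; split=> // x; rewrite A0 inE.
exists (fun x => enum_val (cast_ord AB (enum_rank_in x0A x))); split=> [x _|x y xA yA].
  exact: enum_valP.
move/enum_val_inj/cast_ord_inj=> E.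
by rewrite -(enum_rankK_in x0A xA) -(enum_rankK_in x0A yA) E.
Qed.

Section Matching.
Variables (g h : {perm T}) (q : nat) (f1 fq : T -> T).
Hypothesis gq : forall x, g x != x -> #|porbit g x| = q.
Hypothesis hq : forall x, h x != x -> #|porbit h x| = q.
Let Rg := [set orbit_rep g x | x in [set x | g x != x]].
Let Rh := [set orbit_rep h x | x in [set x | h x != x]].
Hypothesis f1_fixed : forall x, g x = x -> h (f1 x) = f1 x.
Hypothesis f1_inj : {in [set x | g x == x] &, injective f1}.
Hypothesis fq_rep : {in Rg, forall r, fq r \in Rh}.
Hypothesis fq_inj : {in Rg &, injective fq}.

Let psi x := if g x == x then f1 x else fq x.

Let Rg_moved x : g x != x -> orbit_rep g x \in Rg.
Proof. by move=> gx; rewrite imset_f // inE. Qed.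

Let Rh_rep r : r \in Rh -> h r != r /\ orbit_rep h r = r.
Proof. by case/imsetP=> y; rewrite inE => hy ->; rewrite orbit_repK orbit_rep_moved. Qed.

Let psi_fixed x : g x = x -> psi (orbit_rep g x) = f1 x.
Proof. by move=> gx; rewrite /psi orbit_rep_fixed // gx eqxx. Qed.

Let psi_moved x : g x != x -> psi (orbit_rep g x) = fq (orbit_rep g x).
Proof. by move=> gx; rewrite /psi orbit_rep_moved (negbTE gx). Qed.

Let rep_psi x : orbit_rep h (psi (orbit_rep g x)) = psi (orbit_rep g x).
Proof.
have [gx|gx] := eqVneq (g x) x; first by rewrite psi_fixed // orbit_rep_fixed ?f1_fixed.
by rewrite psi_moved //; case: (Rh_rep (fq_rep (Rg_moved gx))).
Qed.

Let card_psi x : #|porbit h (psi (orbit_rep g x))| = #|porbit g x|.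
Proof.
have [gx|gx] := eqVneq (g x) x.
  by rewrite psi_fixed // porbit_fixed ?f1_fixed // porbit_fixed // !cards1.
rewrite gq // psi_moved // hq //; exact: (Rh_rep (fq_rep (Rg_moved gx))).1.
Qed.

Let psi_inj x y :
  psi (orbit_rep g x) \in porbit h (psi (orbit_rep g y)) -> porbit g x = porbit g y.
Proof.
move/(orbit_reps_eq (rep_psi x) (rep_psi y)).
have [gx|gx] := eqVneq (g x) x; have [gy|gy] := eqVneq (g y) y.
- by rewrite !psi_fixed // => /f1_inj; rewrite !inE gx gy !eqxx => /(_ isT isT) ->.
- rewrite (psi_fixed gx) (psi_moved gy) => E.
  by have := (Rh_rep (fq_rep (Rg_moved gy))).1; rewrite -E f1_fixed ?eqxx.
- rewrite (psi_fixed gy) (psi_moved gx) => E.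
  by have := (Rh_rep (fq_rep (Rg_moved gx))).1; rewrite E f1_fixed ?eqxx.
rewrite (psi_moved gx) (psi_moved gy) => /(fq_inj (Rg_moved gx) (Rg_moved gy)) E.
by rewrite -porbit_orbit_rep E porbit_orbit_rep.
Qed.

Lemma conjg_matching : exists phi, g ^ phi = h.
Proof. by exists (intertwiner card_psi psi_inj); exact/conjg_intertwine/intertwinerE. Qed.
End Matching.

Lemma cycle_type_conj g h a q b : (1 < q)%N ->
  has_cycle_type_1l g a q b -> has_cycle_type_1l h a q b -> exists phi, g ^ phi = h.
Proof.
move=> q1 tg th.
have moved_q s : has_cycle_type_1l s a q b -> forall x, s x != x -> #|porbit s x| = q.
  by move=> ts x sx; case: (cycle_type_porbit ts x) => // /eqP; rewrite card_porbit1 (negbTE sx).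
case: (tg) (th) => g1 gq _ [h1 hq _].
have cF : #|[set x | g x == x]| = #|[set x | h x == x]| by rewrite -!ncycles1E g1 h1.
have cR : #|[set orbit_rep g x | x in [set x | g x != x]]| =
          #|[set orbit_rep h x | x in [set x | h x != x]]|.
  by rewrite -(ncycles_reps q1 (moved_q _ tg)) -(ncycles_reps q1 (moved_q _ th)) gq hq.
have [f1 [f1F f1_inj]] := card_eq_injection cF.
have [fq [fqR fq_inj]] := card_eq_injection cR.
apply: (conjg_matching (moved_q _ tg) (moved_q _ th) _ f1_inj fqR fq_inj).
by move=> x gx; apply/eqP; have := f1F x; rewrite !inE gx eqxx; apply.
Qed.
End CycleTypeConjugacy.

Section Parity.
Variable T : finType.
Implicit Types (g s : {perm T}) (z : T).

Lemma odd_perm_involution s j : (forall z, s (s z) = z) ->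
  #|[set z | s z != z]| = (2 * j)%N -> odd_perm s = odd j.
Proof.
move=> ss moved.
have ord2 : (#[s] %| 2)%N.
  by rewrite order_dvdn; apply/eqP/permP => z; rewrite expgS expg1 permM ss perm1.
have sz x : #|porbit s x| = 1%N \/ #|porbit s x| = 2.
  have [->|ne] := eqVneq #|porbit s x| 1%N; first by left.
  by right; apply/(prime_nt_dvdP (isT : prime 2) ne)/(dvdn_trans (card_porbit_dvd s x) ord2).
have [cT cO] := card_cycle_type (isT : (1 < 2)%N) sz.
have cF : (ncycles s 1 + 2 * j)%N = #|T|.
  rewrite ncycles1E -moved -(cardsC [set z | s z == z]).
  by congr (_ + _)%N; apply: eq_card => z; rewrite !inE.
have n2 : ncycles s 2 = j.
  by apply/eqP; rewrite -(eqn_pmul2l (isT : (0 < 2)%N)) -(eqn_add2l (ncycles s 1)) -cT cF.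
by rewrite /odd_perm cO n2 -cF !oddD /=; case: (odd _); case: (odd j).
Qed.

Lemma odd_permX s i : odd_perm (s ^+ i) = odd i && odd_perm s.
Proof.
elim: i => [|i IH]; first by rewrite expg0 odd_perm1.
by rewrite expgSr odd_permM IH /=; case: (odd i); case: (odd_perm s).
Qed.

Lemma Alt_odd_order g : odd #[g] -> g \in 'Alt_T.
Proof.
by move=> og; have := odd_permX g #[g]; rewrite expg_order odd_perm1 og Alt_even /= => <-.
Qed.
End Parity.

Section ConjugacyClasses.
Variable T : finType.
Implicit Types (g h : {perm T}) (z : T).

(* An odd permutation centralizing [g]: a transposition of two fixed points or
   the swap of two [p]-cycles, a product of [p] transpositions. *)
Lemma odd_perm_centralizing g a b : prime #[g] -> odd #[g] ->
  has_cycle_type_1l g a #[g] b -> (2 <= a)%N \/ (2 <= b)%N ->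
  exists tau : {perm T}, odd_perm tau /\ forall z, tau (g z) = g (tau z).
Proof.
move=> pr og [g1 gq _] [a2|b2].
  have : (1 < #|[set x | g x == x]|)%N by rewrite -ncycles1E g1.
  case/card_gt1P=> x [y []]; rewrite !inE => /eqP gx /eqP gy xy.
  by exists (tperm x y); rewrite odd_tperm xy; split=> //; exact: tperm_commute_fixed.
have : (1 < #|[set orbit_rep g x | x in [set x | g x != x]]|)%N.
  by rewrite -(ncycles_reps (prime_gt1 pr) (fun x => @card_porbit_moved _ g x pr)) gq.
case/card_gt1P=> _ [_ [/imsetP[x1 + ->] /imsetP[x2 + ->] r12]].
rewrite !inE => gx1 gx2.
have c12 : #|porbit g (orbit_rep g x1)| = #|porbit g (orbit_rep g x2)|.
  by rewrite !porbit_orbit_rep !card_porbit_moved.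
have [sg [sgg _ sg2 sg_fix]] := cycle_swap (orbit_repK g x1) (orbit_repK g x2) r12 c12.
exists sg; split=> //; rewrite (@odd_perm_involution _ _ #[g] sg2) //.
have -> : [set z | sg z != z] = porbit g x1 :|: porbit g x2.
  by apply/setP=> z; rewrite inE sg_fix negbK !porbit_orbit_rep.
have disj : porbit g x1 :&: porbit g x2 = set0.
  apply/setP=> z; rewrite !inE; apply/negP=> /andP[/porbit_of_mem z1 /porbit_of_mem z2].
  by move: r12; rewrite (orbit_rep_eq (etrans (esym z1) z2)) eqxx.
have := cardsUI (porbit g x1) (porbit g x2).
by rewrite disj cards0 addn0 !card_porbit_moved // => ->; rewrite mul2n addnn.
Qed.

Lemma cycle_type_class (G : {set {perm T}}) g a b :
  (G = 'Sym_T \/ G = 'Alt_T) -> prime #[g] -> odd #[g] ->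
  has_cycle_type_1l g a #[g] b -> (2 <= a)%N \/ (2 <= b)%N ->
  forall h, h \in G -> (has_cycle_type_1l h a #[g] b <-> h \in g ^: G).
Proof.
move=> GE pr og tg ab h hG; split=> [th|/imsetP[x _ ->]]; last exact: cycle_typeJ.
have [phi gphi] := cycle_type_conj (prime_gt1 pr) tg th.
case: GE => GE; subst G; first by apply/imsetP; exists phi; rewrite ?inE.
have [phi_odd|phi_even] := boolP (odd_perm phi).
  have [tau [tau_odd taug]] := odd_perm_centralizing pr og tg ab.
  apply/imsetP; exists (tau * phi); first by rewrite Alt_even odd_permM tau_odd phi_odd.
  by rewrite conjgM (conjg_intertwine taug).
by apply/imsetP; exists phi; rewrite ?Alt_even.
Qed.
End ConjugacyClasses.

Section UniqueFixedPartition.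
Variable T : finType.
Variables (g : {perm T}) (k m : nat) (w : {set {set T}}).
Hypotheses (pr : prime #[g]) (k1 : (1 < k)%N) (m2 : (2 <= m)%N).
Hypothesis card_T : #|T| = (k * m)%N.
Hypothesis wO : w \in uniform_partitions T k.
Hypothesis gw : part_act g w = w.
Hypothesis w_uniq : forall Q, Q \in uniform_partitions T k -> part_act g Q = Q -> Q = w.
Implicit Types (B : {set T}) (x y z u v : T).

Let pw : partition w [set: T]. Proof. by case/uniform_partitionsP: wO. Qed.
Let sw : {in w, forall B, #|B| = k}. Proof. by case/uniform_partitionsP: wO. Qed.
Let F := [set x | g x == x].

Lemma card_blocks : #|w| = m.
Proof.
by apply/eqP; rewrite -(eqn_pmul2l (ltnW k1)) -card_T (card_uniform_partitions wO).
Qed.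

Lemma other_block B : B \in w -> exists2 B', B' \in w & B' != B.
Proof.
move=> Bw; have : (0 < #|w :\ B|)%N.
  by have := cardsD1 B w; rewrite Bw card_blocks => m_eq; move: m2; rewrite m_eq.
by case/card_gt0P=> B'; rewrite !inE => /andP[B'B B'w]; exists B'.
Qed.

(* Uniqueness of [w] makes it invariant under the centralizer of [g]. *)
Lemma commute_block (c : {perm T}) B : (forall z, c (g z) = g (c z)) -> B \in w ->
  [set c x | x in B] \in w.
Proof.
move=> cg Bw; have cgE : c * g = g * c by apply/permP => z; rewrite !permM cg.
suff <- : part_act c w = w by exact: imset_f.
by apply: w_uniq; rewrite ?part_act_uniform // -part_actM cgE part_actM gw.
Qed.

Lemma commute_block_fixed (c : {perm T}) B x : (forall z, c (g z) = g (c z)) ->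
  B \in w -> x \in B -> c x \in B -> [set c y | y in B] = B.
Proof.
move=> cg Bw xB cxB.
by apply: (partition_block_eq pw (commute_block cg Bw) Bw _ cxB); rewrite imset_f.
Qed.

Lemma porbit_sub_block_other B z y : B \in w -> z \in B -> y \in B ->
  y \notin porbit g z -> porbit g z \subset B.
Proof.
move=> Bw zB yB yz; set c := porbit_cycle g z.
have cB : [set c x | x in B] = B.
  apply: (commute_block_fixed (porbit_cycle_commute g z) Bw yB).
  by rewrite porbit_cycleE (negbTE yz).
apply/subsetP=> _ /porbitP[i ->]; elim: i => [|i IH]; first by rewrite expg0 perm1.
rewrite expgSr permM -cB; apply/imsetP; exists ((g ^+ i) z) => //.
by rewrite porbit_cycleE mem_porbit.
Qed.

(* When [B] lies inside the orbit of [z], that orbit is a union of blocks, so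
   [k] divides its length [p]. *)
Lemma porbit_sub_block B z : B \in w -> z \in B -> porbit g z \subset B.
Proof.
move=> Bw zB; have [|/subsetPn[y yB yz]] := boolP (B \subset porbit g z); last first.
  exact: porbit_sub_block_other yB yz.
move=> Bz; have k_dvd : (k %| #|porbit g z|)%N.
  apply: (dvdn_card_union_blocks wO) => B' u B'w uB' uz.
  apply/subsetP=> y yB'; apply/negPn/negP=> yz.
  have := porbit_sub_block_other B'w uB' yB'; rewrite (porbit_of_mem uz) => /(_ yz) zB'.
  have zB'' : z \in B' by rewrite (subsetP zB') ?porbit_id.
  by rewrite (subsetP Bz) // (partition_block_eq pw Bw B'w zB zB'') in yz.
have ck : #|porbit g z| = k.
  case: (card_porbit_prime z pr) => cz; rewrite cz in k_dvd *.
    by move: k_dvd k1; rewrite dvdn1 => /eqP ->.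
  by apply/esym/(prime_nt_dvdP pr _ k_dvd); rewrite neq_ltn k1 orbT.
suff /eqP <- : B == porbit g z by [].
by rewrite eqEcard Bz ck (sw Bw) leqnn.
Qed.

Lemma block_stable B : B \in w -> [set g x | x in B] = B.
Proof.
move=> Bw; apply: perm_set_stable => u uB; apply: (subsetP (porbit_sub_block Bw uB)).
by rewrite -{1}(expg1 g) mem_porbit.
Qed.

Lemma fixed_block B x y : B \in w -> x \in B -> g x = x -> g y = y -> y \in B.
Proof.
move=> Bw xB gx gy; apply/negPn/negP => yB.
have [u]: exists u, u \in B :\ x.
  by apply/set0Pn; rewrite -card_gt0; move: k1; rewrite -(sw Bw) (cardsD1 x B) xB.
rewrite !inE => /andP[ux uB].
have uy : u != y by apply: contraNneq yB => <-.
have tB : [set tperm x y v | v in B] = B.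
  by apply: (commute_block_fixed (tperm_commute_fixed gx gy) Bw uB); rewrite tpermD // eq_sym.
by case/negP: yB; rewrite -tB; apply/imsetP; exists x; rewrite ?tpermL.
Qed.

(* Swapping the cycles of [u] and [v] commutes with [g] and fixes [t]. *)
Lemma other_blocks_fixed B t u : B \in w -> t \in B -> u \in B ->
  g u != u -> t \notin porbit g u ->
  forall B' v, B' \in w -> B' != B -> v \in B' -> g v = v.
Proof.
move=> Bw tB uB gu tu B' v B'w B'B vB'; apply/eqP/negPn/negP => gv.
have ruB : orbit_rep g u \in B := subsetP (porbit_sub_block Bw uB) _ (orbit_rep_mem g u).
have rvB' : orbit_rep g v \in B' := subsetP (porbit_sub_block B'w vB') _ (orbit_rep_mem g v).
have ruv : orbit_rep g u != orbit_rep g v.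
  by apply: contra_neq B'B => ruv; apply: (partition_block_eq pw B'w Bw rvB'); rewrite -ruv.
have cuv : #|porbit g (orbit_rep g u)| = #|porbit g (orbit_rep g v)|.
  by rewrite !porbit_orbit_rep !card_porbit_moved.
have [sg [sgg sg_uv _ sg_fix]] := cycle_swap (orbit_repK g u) (orbit_repK g v) ruv cuv.
have sgt : sg t = t.
  apply/eqP; rewrite sg_fix !inE !porbit_orbit_rep negb_or tu /=.
  apply: contra B'B => tv; apply/eqP/(partition_block_eq pw B'w Bw _ tB).
  exact: subsetP (porbit_sub_block B'w vB') _ tv.
have sgB : [set sg y | y in B] = B by apply: (commute_block_fixed sgg Bw tB); rewrite sgt.
have rvB : orbit_rep g v \in B by rewrite -sgB -sg_uv imset_f.
by case/eqP: B'B; apply: (partition_block_eq pw B'w Bw rvB').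
Qed.

Lemma fixed_points_block B : B \in w ->
  (forall B' v, B' \in w -> B' != B -> v \in B' -> g v = v) -> F \in w /\ m = 2.
Proof.
move=> Bw fixed_others.
have others_F B' : B' \in w -> B' != B -> B' = F.
  move=> B'w B'B; have [x xB'] := partition_block_n0 pw B'w.
  apply/setP=> u; rewrite inE; apply/idP/eqP => [|gu]; first exact: fixed_others.
  exact: fixed_block B'w xB' (fixed_others _ _ B'w B'B xB') gu.
have [B' B'w B'B] := other_block Bw.
have Fw : F \in w by rewrite -(others_F _ B'w B'B).
split=> //; apply/eqP; rewrite eqn_leq m2 andbT -card_blocks.
have wBF : w \subset [set B; F].
  apply/subsetP=> B'' B''w; rewrite !inE; have [//|B''B] := eqVneq B'' B.
  by rewrite (others_F _ B''w B''B) eqxx orbT.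
by apply: leq_trans (subset_leq_card wBF) _; rewrite cards2; case: (_ != _).
Qed.

(* Trading [p] of the [k] fixed points of [F] for a [p]-cycle gives a second
   [g]-invariant partition [{A, ~: A}]. *)
Lemma short_orbit_false z : F \in w -> m = 2 -> g z != z -> (#[g] < k)%N -> False.
Proof.
move=> Fw m_2 gz pk; set O := porbit g z.
have [s0 [Us0 ss0 s0F]] : exists s0 : seq T, [/\ uniq s0, size s0 = #[g] & {subset s0 <= F}].
  by apply/card_geqP; rewrite (sw Fw) ltnW.
set S := [set x in s0].
have SF : S \subset F by apply/subsetP=> x; rewrite inE; exact: s0F.
have cFS : #|F :\: S| = (k - #[g])%N.
  by rewrite cardsD (setIidPr SF) (sw Fw) cardsE (card_uniqP Us0) ss0.
have OF u : u \in O -> u \notin F by move=> uO; rewrite inE (porbit_fixE uO).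
set A := (F :\: S) :|: O.
have cA : #|A| = k.
  have disj : (F :\: S) :&: O = set0.
    by apply/setP=> u; rewrite !inE; apply/negP=> /andP[/andP[_ uF] /OF]; rewrite inE uF.
  have := cardsUI (F :\: S) O; rewrite disj cards0 addn0 cFS card_porbit_moved // => ->.
  by rewrite subnK // ltnW.
have cAc : #|~: A| = k.
  by apply/eqP; rewrite -(eqn_add2l #|A|) cardsC card_T m_2 cA muln2 addnn.
have gA : [set g u | u in A] = A.
  apply: perm_set_stable => u; rewrite !inE => /orP[/andP[uS uF]|uO].
    by rewrite (eqP uF) uS uF.
  by rewrite mem_porbitS uO orbT.
have Aw : A \in w.
  rewrite -(w_uniq (complement_partition_uniform cA cAc) (complement_partition_fixed gA)).
  by apply/imsetP; exists z; rewrite // ifT // inE porbit_id orbT.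
have [x xFS] : exists x, x \in F :\: S by apply/set0Pn; rewrite -card_gt0 cFS subn_gt0.
have AF : A = F.
  by apply: (partition_block_eq pw Aw Fw (x := x)); [rewrite inE xFS | case/setDP: xFS].
by have := OF z (porbit_id g z); rewrite -AF inE porbit_id orbT.
Qed.

Lemma moved_block B z : B \in w -> z \in B -> g z != z -> B = porbit g z.
Proof.
move=> Bw zB gz; apply/eqP; rewrite eqEsubset porbit_sub_block // andbT.
apply/subsetP=> y yB; apply/negPn/negP => yz.
have [Fw m_2] := fixed_points_block Bw (other_blocks_fixed Bw yB zB gz yz).
apply: (short_orbit_false Fw m_2 gz); rewrite -(card_porbit_moved pr gz) -(sw Bw).
by apply: proper_card; rewrite properE porbit_sub_block //=; apply/subsetPn; exists y.
Qed.

Lemma exists_moved : exists z, g z != z.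
Proof.
apply/existsP; apply: contraT; rewrite negb_exists => /forallP g1.
suff /eqP : g == 1 by move=> g_1; move: (prime_gt1 pr); rewrite g_1 order1.
by apply/eqP/permP => z; rewrite perm1; apply/eqP; move/negPn: (g1 z).
Qed.

Lemma block_size : k = #[g].
Proof.
have [z gz] := exists_moved.
by rewrite -(sw (pblockT_mem pw z)) (moved_block (pblockT_mem pw z) (mem_pblockT pw z) gz)
  card_porbit_moved.
Qed.

Lemma card_fixed : #|F| = 0%N \/ #|F| = #[g].
Proof.
have [->|[x xF]] := set_0Vmem F; [by left; rewrite cards0 | right].
suff <- : pblock w x = F by rewrite sw ?pblockT_mem // -block_size.
have gx : g x = x by apply/eqP; rewrite inE in xF.
apply/setP=> u; rewrite inE; apply/idP/eqP => [uB|gu].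
  apply/eqP/negPn/negP=> gu.
  have xu : x \in porbit g u by rewrite -(moved_block (pblockT_mem pw x) uB gu) mem_pblockT.
  by move: xF; rewrite inE (porbit_fixE xu) (negbTE gu).
exact: fixed_block (pblockT_mem pw x) (mem_pblockT pw x) gx gu.
Qed.

(* Replacing the blocks inside [U] by the orbits of [d] again gives a
   [g]-invariant partition, which must be [w]. *)
Lemma commute_orbits_blocks (d : {perm T}) (U : {set T}) :
  (forall z, d (g z) = g (d z)) ->
  (forall y z, z \in porbit g y -> (z \in U) = (y \in U)) ->
  (forall z, z \in U -> g z != z) ->
  (forall y z, z \in U -> y \in porbit d z -> y \in U) ->
  (forall z, z \in U -> #|porbit d z| = k) ->
  forall z, z \in U -> porbit d z \in w.
Proof.
move=> dg U_g U_moved U_d card_d.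
set f := fun z => if z \in U then porbit d z else pblock w z.
have f_mem z : z \in f z.
  by rewrite /f; case: ifP => _; [exact: porbit_id | exact: mem_pblockT].
have f_eq z y : y \in f z -> f y = f z.
  rewrite /f; case: ifP => zU yz; first by rewrite (U_d _ _ zU yz) (porbit_of_mem yz).
  case: ifP => yU; last by rewrite (pblockT_eq pw (pblockT_mem pw z) yz).
  have zy : z \in porbit g y.
    by rewrite -(moved_block (pblockT_mem pw z) yz (U_moved _ yU)) mem_pblockT.
  by rewrite (U_g _ _ zy) yU in zU.
have f_card z : #|f z| = k by rewrite /f; case: ifP => zU; rewrite ?card_d ?sw ?pblockT_mem.
have gf z : [set g u | u in f z] = f (g z).
  have gU : (g z \in U) = (z \in U) by apply: U_g; rewrite -{1}(expg1 g) mem_porbit.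
  rewrite /f gU; case: ifP => zU.
    rewrite -porbitJ; congr porbit; apply: conjg_intertwine => u; exact/esym/dg.
  rewrite block_stable ?pblockT_mem //; apply/esym/(pblockT_eq pw (pblockT_mem pw z)).
  by rewrite -{1}(block_stable (pblockT_mem pw z)) imset_f ?mem_pblockT.
move=> z zU; rewrite -(w_uniq (class_uniform_partition f_mem f_eq f_card) (part_act_class gf)).
by apply/imsetP; exists z; rewrite // /f zU.
Qed.

(* Otherwise rotate [p] of the [p]-cycles along a list of representatives: the
   orbits of the rotation [d] meet each of these cycles once, yet they are blocks
   of [w], hence cycles of [g]. *)
Lemma ncycles_lt : (ncycles g #[g] < #[g])%N.
Proof.
rewrite ltnNge; apply/negP => many; have p1 := prime_gt1 pr.
set R := [set orbit_rep g x | x in [set x | g x != x]].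
have [s [Us ss sR]] : exists s : seq T, [/\ uniq s, size s = #[g] & {subset s <= R}].
  by apply/card_geqP; rewrite -(ncycles_reps p1 (fun x => @card_porbit_moved _ g x pr)).
have Hs u : u \in s -> orbit_rep g u = u /\ #|porbit g u| = #[g].
  case/sR/imsetP=> x; rewrite inE => gx ->.
  by rewrite orbit_repK porbit_orbit_rep card_porbit_moved.
have [d [dg rep_dX card_d]] := cycle_rotation_orbits pr Us ss Hs.
set U := [set z | orbit_rep g z \in s].
have U_moved z : z \in U -> g z != z.
  rewrite inE => /Hs[_]; rewrite porbit_orbit_rep => cz.
  by rewrite -card_porbit1 cz eq_sym neq_ltn p1.
have U_g y z : z \in porbit g y -> (z \in U) = (y \in U).
  by move/porbit_of_mem/orbit_rep_eq; rewrite !inE => ->.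
have U_d y z : z \in U -> y \in porbit d z -> y \in U.
  by rewrite !inE => zs /porbitP[i ->]; rewrite rep_dX; elim: i => //= i IH; rewrite mem_next.
have [z0 _] := exists_moved; set u := nth z0 s 0.
have us : u \in s by rewrite mem_nth // ss prime_gt0.
have uU : u \in U by rewrite inE (Hs _ us).1.
have card_dk z : z \in U -> #|porbit d z| = k by rewrite inE block_size => /card_d.
have du := moved_block (commute_orbits_blocks dg U_g U_moved U_d card_dk uU)
  (porbit_id d u) (U_moved _ uU).
have : d u \in porbit g u by rewrite -du -{1}(expg1 d) mem_porbit.
move/porbit_of_mem/orbit_rep_eq; have := rep_dX 1%N u; rewrite expg1 /= => ->.
by rewrite (Hs _ us).1 => /eqP; apply/negP/next_neq; rewrite ?ss.
Qed.

Lemma unique_fixed_partition_structure :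
  [/\ k = #[g], forall B, B \in w -> [set g x | x in B] = B &
   (ncycles g 1 = #[g] /\ ncycles g #[g] = m.-1 /\ (m <= #[g])%N) \/
   (ncycles g 1 = 0%N /\ ncycles g #[g] = m /\ (m < #[g])%N)].
Proof.
have p1 := prime_gt1 pr.
split; [exact: block_size | exact: block_stable |].
have [cT _] := card_cycle_type p1 (fun x => card_porbit_prime x pr).
have lt := ncycles_lt.
rewrite card_T block_size ncycles1E in cT; rewrite ncycles1E.
case: card_fixed => cF; rewrite cF in cT.
  right; have cm : ncycles g #[g] = m by apply/eqP; rewrite -(eqn_pmul2l (ltnW p1)) cT.
  by rewrite -cm.
left; have cm : ncycles g #[g] = m.-1.
  apply/eqP; rewrite -(eqn_pmul2l (ltnW p1)) -(eqn_add2l #[g]) -cT.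
  by case: m m2 => // m' _; rewrite mulnS.
by move: lt; rewrite cm; case: m m2.
Qed.
End UniqueFixedPartition.

Definition fixed_orbit_partition (T : finType) (g : {perm T}) : {set {set T}} :=
  [set (if g z == z then [set x | g x == x] else porbit g z) | z : T].

Section FixedOrbitPartition.
Variable T : finType.
Variables (g : {perm T}) (m : nat).
Hypothesis pr : prime #[g].
Hypothesis card_F : #|[set x | g x == x]| = #[g].
Hypothesis card_T : #|T| = (#[g] * m)%N.
Hypothesis m_le : (m <= #[g])%N.
Implicit Types (Q : {set {set T}}) (B : {set T}).
Let F := [set x | g x == x].

Lemma fixed_orbit_partition_uniform :
  fixed_orbit_partition g \in uniform_partitions T #[g].
Proof.
apply: class_uniform_partition => [z|z y|z]; case: ifP => gz.
- by rewrite inE gz.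
- exact: porbit_id.
- by rewrite inE => ->.
- by move=> yz; rewrite (porbit_fixE yz) gz (porbit_of_mem yz).
- exact: card_F.
- by rewrite card_porbit_moved ?gz.
Qed.

Lemma fixed_orbit_partition_fixed :
  part_act g (fixed_orbit_partition g) = fixed_orbit_partition g.
Proof.
apply: part_act_blockwise => _ /imsetP[z _ ->]; apply: perm_set_stable => u.
case: ifP => _; last by rewrite mem_porbitS.
by rewrite !inE => /eqP gu; rewrite !gu eqxx.
Qed.

(* [g] permutes the blocks of [Q] in orbits of length [1] or [p]; the block of a
   fixed point is fixed, which leaves fewer than [p] blocks for a long orbit. *)
Lemma fixed_partition_blocks_stable Q : Q \in uniform_partitions T #[g] ->
  part_act g Q = Q -> forall B, B \in Q -> [set g u | u in B] = B.
Proof.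
move=> QO gQ; have [pQ _] := elimT (uniform_partitionsP _ _) QO.
have p1 := prime_gt1 pr.
have cQ : #|Q| = m.
  by apply/eqP; rewrite -(eqn_pmul2l (ltnW p1)) -card_T (card_uniform_partitions QO).
set pi := set_perm g.
have piQ i B : B \in Q -> (pi ^+ i) B \in Q.
  by move=> BQ; rewrite set_permX -(part_actX i gQ); apply: imset_f.
have [x0 x0F] : exists x0, x0 \in F by apply/set0Pn; rewrite -card_gt0 card_F prime_gt0.
have gx0 : g x0 = x0 by apply/eqP; rewrite inE in x0F.
set B0 := pblock Q x0; have B0Q : B0 \in Q := pblockT_mem pQ x0.
have piB0 : pi B0 = B0.
  apply: (partition_block_eq pQ _ B0Q (x := x0)); rewrite ?mem_pblockT //.
    by rewrite -(expg1 pi) piQ.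
  by rewrite set_permE; apply/imsetP; exists x0; rewrite ?mem_pblockT // gx0.
move=> B BQ; rewrite -set_permE.
apply/eqP/negPn/negP => piB.
have cB : #|porbit pi B| = #[g].
  apply/(prime_nt_dvdP pr); rewrite ?card_porbit1 //.
  exact: dvdn_trans (card_porbit_dvd pi B) (order_set_perm_dvd g).
have sub : porbit pi B \subset Q :\ B0.
  apply/subsetP=> C /porbitP[i ->]; rewrite !inE piQ // andbT; apply/eqP => E.
  have /eqP : #|porbit pi B0| == 1%N by rewrite card_porbit1 piB0.
  by rewrite -E porbit_perm cB => p_1; rewrite p_1 in p1.
have := cardsD1 B0 Q; rewrite B0Q cQ add1n => m_eq.
by have := subset_leq_card sub; rewrite cB => /(leq_trans m_le); rewrite m_eq ltnn.
Qed.

Lemma stable_partition_eq Q : Q \in uniform_partitions T #[g] ->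
  (forall B, B \in Q -> [set g u | u in B] = B) -> Q = fixed_orbit_partition g.
Proof.
case/uniform_partitionsP=> pQ sQ gQ.
have [pW _] := elimT (uniform_partitionsP _ _) fixed_orbit_partition_uniform.
apply: (partition_subset_eq pQ pW); apply/subsetP=> B BQ.
have porbit_sub u : u \in B -> porbit g u \subset B.
  move=> uB; apply/subsetP=> _ /porbitP[i ->]; elim: i => [|i IH]; first by rewrite expg0 perm1.
  by rewrite expgSr permM -(gQ B BQ) imset_f.
have [/exists_inP[v vB gv]|/exists_inP B_fixed] := boolP [exists v in B, g v != v].
  have -> : B = porbit g v.
    by apply/eqP; rewrite eq_sym eqEcard porbit_sub // card_porbit_moved // sQ ?leqnn.
  by apply/imsetP; exists v; rewrite // (negbTE gv).
have [u uB] := partition_block_n0 pQ BQ.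
have BF : B \subset F.
  by apply/subsetP=> x xB; rewrite inE; apply/negPn/negP => gx; apply: B_fixed; exists x.
have -> : B = F by apply/eqP; rewrite eqEcard BF card_F sQ ?leqnn.
have gu : g u == u by have := subsetP BF u uB; rewrite inE.
by apply/imsetP; exists u; rewrite // gu.
Qed.

Lemma fixed_orbit_quasi_semiregular : quasi_semiregular g (uniform_partitions T #[g]).
Proof.
apply/(quasi_semiregular_prime _ pr); exists (fixed_orbit_partition g).
  exact: fixed_orbit_partition_uniform.
split=> [|Q QO gQ]; first exact: fixed_orbit_partition_fixed.
exact/(stable_partition_eq QO)/(fixed_partition_blocks_stable QO gQ).
Qed.
End FixedOrbitPartition.

(* Fixes [0, p) and rotates each later block [q p, (q + 1) p) by one step. *)
Definition rotate_blocks (p i : nat) : nat :=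
  if (i < p)%N then i else (i %/ p * p + (i %% p).+1 %% p)%N.

Section RotateBlocks.
Variable p : nat.
Hypothesis p1 : (1 < p)%N.
Let p0 : (0 < p)%N := ltnW p1.

Lemma rotate_blocksE q r : (p <= q * p + r)%N -> (r < p)%N ->
  rotate_blocks p (q * p + r) = (q * p + r.+1 %% p)%N.
Proof.
move=> pq rp; rewrite /rotate_blocks ltnNge pq /=.
by rewrite divnMDl // divn_small // addn0 modnMDl (modn_small rp).
Qed.

Lemma rotate_blocks_iter i j : (p <= i)%N ->
  iter j (rotate_blocks p) i = (i %/ p * p + (i %% p + j) %% p)%N.
Proof.
move=> pi; have q1 : (0 < i %/ p)%N by rewrite divn_gt0.
elim: j => [|j IH]; first by rewrite addn0 modn_mod -divn_eq.
rewrite iterS IH rotate_blocksE ?ltn_pmod //; last first.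
  by apply: leq_trans (leq_addr _ _); rewrite -{1}(mul1n p) leq_mul2r q1 orbT.
by rewrite -addn1 modnDml -addnA addn1.
Qed.

Lemma rotate_blocks_iterp i : iter p (rotate_blocks p) i = i.
Proof.
have [ip|pi] := ltnP i p; last by rewrite rotate_blocks_iter // modnDr modn_mod -divn_eq.
have fixed j : iter j (rotate_blocks p) i = i by elim: j => //= j ->; rewrite /rotate_blocks ip.
exact: fixed.
Qed.

Lemma rotate_blocks_inj : injective (rotate_blocks p).
Proof.
move=> i j E; have iterSp x :
    iter p (rotate_blocks p) x = iter p.-1 (rotate_blocks p) (rotate_blocks p x).
  by rewrite -iterSr prednK.
by rewrite -(rotate_blocks_iterp i) -(rotate_blocks_iterp j) !iterSp E.
Qed.

Lemma rotate_blocks_lt m i : (i < p * m)%N -> (rotate_blocks p i < p * m)%N.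
Proof.
move=> im; rewrite /rotate_blocks; case: ifP => // ip.
have qm : (i %/ p < m)%N by rewrite ltn_divLR // mulnC.
apply: (@leq_trans ((i %/ p).+1 * p)).
  by rewrite mulSnr ltn_add2l ltn_pmod.
by rewrite mulnC leq_mul2l qm orbT.
Qed.

Lemma rotate_blocks_fix i : (rotate_blocks p i == i) = (i < p)%N.
Proof.
rewrite /rotate_blocks; case: ifP => ip; first by rewrite eqxx.
apply/negbTE; apply/negP => /eqP E.
have := congr1 (modn^~ p) E; rewrite modnMDl modn_mod => E2.
have ltm := ltn_pmod i p0.
case: (ltngtP (i %% p).+1 p) => ip1.
- by move: E2; rewrite modn_small //; lia.
- lia.
- by move: E2; rewrite ip1 modnn; lia.
Qed.
End RotateBlocks.

Lemma exists_perm_prime_fixed n p m : prime p -> n = (p * m)%N -> (1 < m)%N ->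
  exists g : {perm 'I_n}, #[g] = p /\ #|[set x | g x == x]| = p.
Proof.
move=> pr nE m1; have p1 := prime_gt1 pr.
have ltf (i : 'I_n) : (rotate_blocks p i < n)%N.
  have im : (nat_of_ord i < p * m)%N by rewrite -nE ltn_ord.
  by rewrite (leq_trans (rotate_blocks_lt p1 im)) // nE.
set gf := fun i : 'I_n => Ordinal (ltf i).
have gi : injective gf.
  by move=> i j /(congr1 val) /= /(rotate_blocks_inj p1) /val_inj.
set g := perm gi.
have gX j (i : 'I_n) : val ((g ^+ j) i) = iter j (rotate_blocks p) i.
  by rewrite permX; elim: j => //= j IH; rewrite permE /= IH.
have gp : g ^+ p = 1 by apply/permP => i; apply/val_inj; rewrite gX perm1 rotate_blocks_iterp.
have pn : (p < n)%N by rewrite nE -{1}(muln1 p) ltn_mul2l ltnW // m1.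
have ord1 : #[g] != 1%N.
  apply/negP => /eqP E; have := expg_order g; rewrite E expg1 => g1.
  have := gX 1%N (Ordinal pn); rewrite g1 expg1 perm1 /= => /eqP.
  by rewrite eq_sym (rotate_blocks_fix p1) ltnn.
exists g; split; first by apply/(prime_nt_dvdP pr ord1); rewrite order_dvdn gp.
have le : (p <= n)%N by exact: ltnW.
have -> : [set x | g x == x] = [set widen_ord le j | j : 'I_p].
  apply/setP=> x; rewrite inE; apply/idP/imsetP.
    move/eqP/(congr1 val); rewrite permE /= => /eqP; rewrite (rotate_blocks_fix p1) => xp.
    by exists (Ordinal xp) => //; apply/val_inj.
  case=> j _ ->; apply/eqP/val_inj; rewrite permE /=; apply/eqP.
  by rewrite (rotate_blocks_fix p1).
by rewrite card_imset ?card_ord // => a b /(congr1 val) /= /val_inj.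
Qed.

Lemma quasi_semiregular_structure (T : finType) (g : {perm T}) k m :
  prime #[g] -> (1 < k)%N -> (2 <= m)%N -> #|T| = (k * m)%N ->
  quasi_semiregular g (uniform_partitions T k) ->
  [/\ k = #[g], (m <= #[g])%N,
      forall Gamma, Gamma \in uniform_partitions T k -> part_act g Gamma = Gamma ->
        forall B, B \in Gamma -> [set g x | x in B] = B &
      has_cycle_type_1l g #[g] #[g] m.-1 \/
      (has_cycle_type_1l g 0 #[g] m /\ (m < #[g])%N)].
Proof.
move=> pr k1 m2 cT /(quasi_semiregular_prime _ pr)[w wO [gw w_uniq]].
have [kg blocks types] := unique_fixed_partition_structure pr k1 m2 cT wO gw w_uniq.
have tg := cycle_type_prime pr.
split=> // [|Gamma GO gG|].
- by case: types => [[_ [_ mp]]|[_ [_ /ltnW mp]]].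
- by rewrite (w_uniq _ GO gG).
by case: types => [[n1 [nq _]]|[n1 [nq mp]]]; rewrite n1 nq in tg; [left | right].
Qed.

Lemma odd_prime_of_card p m : prime p -> (4 < p * m)%N -> (m <= p)%N -> odd p.
Proof. by move=> pr pm mp; apply/negPn/negP => /(prime_oddPn pr) p2; subst p; lia. Qed.

Lemma two_le_blocks n k m :
  4 < n -> 1 < k -> (k <= n %/ 2)%N -> n = (k * m)%N -> (2 <= m)%N.
Proof.
move=> n4 k1 kn nkm; case: m nkm => [|[|m']] nkm //; first by move: n4; rewrite nkm muln0.
by move: kn; rewrite nkm muln1 leqNgt ltn_Pdiv // ltnW.
Qed.

Lemma mem_Sym_Alt (T : finType) (G : {set {perm T}}) g :
  G = 'Sym_T \/ G = 'Alt_T -> odd #[g] -> g \in G.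
Proof. by case=> -> og; [rewrite /Sym inE | exact: Alt_odd_order]. Qed.

Unset Implicit Arguments.
Theorem proposition6p4 (n k m : nat) (G : {set {perm 'I_n}}) :
  4 < n -> 1 < k -> (k <= n %/ 2)%N -> (n = k * m)%N ->
  (G = 'Sym_('I_n) \/ G = 'Alt_('I_n)) ->
  (forall p, prime p ->
     ((exists2 g, g \in G & #[g] = p /\ quasi_semiregular g (uniform_partitions 'I_n k))
      <-> [/\ odd p, k = p & (2 <= m <= p)%N])) /\
  (forall (g : {perm 'I_n}) (Gamma : {set {set 'I_n}}),
     g \in G -> prime #[g] ->
     quasi_semiregular g (uniform_partitions 'I_n k) ->
     Gamma \in uniform_partitions 'I_n k -> part_act g Gamma = Gamma ->
     [/\ g \in 'Alt_('I_n),
         (forall B, B \in Gamma -> [set g x | x in B] = B) &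
         (m = #[g] /\
            has_cycle_type_1l g #[g] #[g] m.-1 /\
            (forall h, h \in G -> (has_cycle_type_1l h #[g] #[g] m.-1 <-> h \in g ^: G)))
         \/
         ((2 <= m < #[g])%N /\
            ((has_cycle_type_1l g #[g] #[g] m.-1 /\
              (forall h, h \in G -> (has_cycle_type_1l h #[g] #[g] m.-1 <-> h \in g ^: G))) \/
             (has_cycle_type_1l g 0 #[g] m /\
              (forall h, h \in G -> (has_cycle_type_1l h 0 #[g] m <-> h \in g ^: G)))))]).
Proof.
move=> n4 k1 kn nkm GE; have m2 := two_le_blocks n4 k1 kn nkm.
have cT : #|'I_n| = (k * m)%N by rewrite card_ord.
split=> [p pr|g Gamma gG pr qsr GO gGamma].
  split=> [[g gG [og qsr]]|[op kp /andP[_ mp]]].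
    subst p; have [kg mp _ _] := quasi_semiregular_structure pr k1 m2 cT qsr.
    by rewrite m2 mp kg (odd_prime_of_card pr _ mp) // -kg -nkm.
  have [g [og cF]] := exists_perm_prime_fixed pr (etrans nkm (congr1 (muln^~ m) kp)) m2.
  exists g; first by apply: mem_Sym_Alt GE _; rewrite og.
  split=> //; rewrite kp -og; apply: (@fixed_orbit_quasi_semiregular _ g m); rewrite ?og //.
  by rewrite card_ord nkm kp.
have [kg mp blocks types] := quasi_semiregular_structure pr k1 m2 cT qsr.
have og : odd #[g] by apply: odd_prime_of_card pr _ mp; rewrite -kg -nkm.
split; [exact: Alt_odd_order | exact: blocks |].
case: types => [tg|[tg m_lt]]; have cl := cycle_type_class GE pr og tg.
  have cl1 := cl (or_introl (prime_gt1 pr)).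
  move: mp; rewrite leq_eqVlt => /orP[/eqP m_eq|m_lt]; first by left.
  by right; split; [rewrite m2 | left].
by right; split; [rewrite m2 m_lt | right; split=> //; exact: cl (or_intror m2)].
Qed.
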